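(* Let $r$ be odd with $1\le r\le n$. If $\mathbf{x}_1,\ldots,\mathbf{x}_r\in\mathbb{F}_2^n$ and both $A$ and $A+\sum_{i=1}^r\mathbf{x}_i\mathbf{x}_i^{\top}$ lie in $\mathrm{SGL}_n(\mathbb{F}_2)$, then $\mathbf{x}_i^{\top}A^{-1}\mathbf{x}_i=0$ for some $i$.
   Context: $\mathrm{SGL}_n(\mathbb{F}_2)$ is the set of invertible symmetric $n\times n$ matrices over the binary field $\mathbb{F}_2$. *)

From mathcomp Require Import all_boot all_algebra.
Set Implicit Arguments. Unset Strict Implicit. Unset Printing Implicit Defensive.
Import GRing.Theory.
Local Open Scope ring_scope.

Definition SGL (n : nat) (A : 'M['F_2]_n) : bool :=
  (A^T == A) && (A \in unitmx).

From mathcomp Require Import all_boot all_algebra.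
Set Implicit Arguments. Unset Strict Implicit. Unset Printing Implicit Defensive.
Import GRing.Theory.
Local Open Scope ring_scope.

(* Stack the x_i as the rows of X, so that the perturbation is X^T X, and
   suppose every x_i^T A^-1 x_i is 1. By the Woodbury identity the capacitance
   matrix N = 1 + X A^-1 X^T is invertible. But N is symmetric with diagonal
   1 + 1 = 0, i.e. alternating of odd order r, and such a matrix is singular:
   it lifts to a skew-symmetric integer matrix M, whose determinant satisfies
   det M = det M^T = (-1)^r det M = - det M. *)

Lemma natr_Fp p (a : 'F_p) : prime p -> (a : nat)%:R = a.
Proof.
move=> p_pr; apply: ord_inj; rewrite val_Fp_nat // modn_small //.
by rewrite -[X in (_ < X)%N](Fp_cast p_pr).
Qed.

Lemma eq1_F2 (a : 'F_2) : a != 0 -> a = 1.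
Proof. by case: a => -[|[|]] // ? _; apply: val_inj. Qed.

Lemma det_skew_odd (R : idomainType) n (M : 'M[R]_n) :
  2%:R != 0 :> R -> odd n -> M^T = - M -> \det M = 0.
Proof.
move=> two_neq0 odd_n skewM; apply/eqP.
have : \det M = - \det M.
  by rewrite -{1}det_tr skewM -scaleN1r detZ -signr_odd odd_n expr1 mulN1r.
by move/eqP; rewrite -subr_eq0 opprK -mulr2n -mulr_natr mulf_eq0 (negbTE two_neq0) orbF.
Qed.

Lemma alternating_F2_lift n (N : 'M['F_2]_n) :
  N^T = N -> (forall i, N i i = 0) ->
  exists2 M : 'M[int]_n, M^T = - M & map_mx intr M = N.
Proof.
move=> symN diagN.
exists (\matrix_(i, j) if (i < j)%N then (N i j : nat)%:Z else - (N j i : nat)%:Z).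
- apply/matrixP => i j; rewrite !mxE.
  case: (ltngtP i j) => [//|_|/val_inj eq_ij]; first by rewrite opprK.
  by rewrite eq_ij diagN oppr0.
- apply/matrixP => i j; rewrite !mxE.
  have twoF2 : 2 \in [pchar 'F_2] by exact: pchar_Fp.
  case: ifP => _; first exact: natr_Fp.
  rewrite rmorphN (oppr_pchar2 twoF2) -[in RHS]symN mxE; exact: natr_Fp.
Qed.

Lemma det_alternating_F2_odd n (N : 'M['F_2]_n) :
  odd n -> N^T = N -> (forall i, N i i = 0) -> \det N = 0.
Proof.
move=> odd_n symN diagN; have [M skewM <-] := alternating_F2_lift symN diagN.
by rewrite det_map_mx (det_skew_odd _ odd_n skewM) ?rmorph0.
Qed.

Lemma mulmx_sum_col_row (R : pzSemiRingType) m n p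
    (A : 'M[R]_(m, n)) (B : 'M[R]_(n, p)) :
  A *m B = \sum_i col i A *m row i B.
Proof.
apply/matrixP => a b; rewrite !mxE summxE; apply: eq_bigr => i _.
by rewrite !mxE big_ord1 !mxE.
Qed.

Lemma mulmx_row_col (R : pzSemiRingType) m n p
    (A : 'M[R]_(m, n)) (B : 'M[R]_(n, p)) i j :
  (A *m B) i j = (row i A *m col j B) 0 0.
Proof. by rewrite !mxE; apply: eq_bigr => k _; rewrite !mxE. Qed.

(* The inverse is 1 - X (A + Y X)^-1 Y (Woodbury). *)
Lemma unitmx_capacitance (R : comUnitRingType) m n (A : 'M[R]_n)
    (X : 'M[R]_(m, n)) (Y : 'M[R]_(n, m)) :
  A \in unitmx -> A + Y *m X \in unitmx -> 1%:M + X *m invmx A *m Y \in unitmx.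
Proof.
move=> unitA unitAYX; set B := invmx A; set C := invmx (A + Y *m X).
have XBY : X *m B *m Y = X *m C *m Y + X *m B *m Y *m X *m C *m Y.
  rewrite -{1}[Y]mul1mx -(mulmxV unitAYX) -/C !mulmxA mulmxDr mulmxDl.
  by rewrite -(mulmxA X B A) mulVmx // mulmx1 mulmxDl !mulmxA.
suff /mulmx1_unit[] : (1%:M + X *m B *m Y) *m (1%:M - X *m C *m Y) = 1%:M by [].
by rewrite mulmxBr mulmx1 mulmxDl mul1mx !mulmxA -XBY addrK.
Qed.

Theorem lemma3p4 (n r : nat) (x : 'I_r -> 'cV['F_2]_n) (A : 'M['F_2]_n) :
  odd r -> (1 <= r)%N -> (r <= n)%N ->
  SGL A -> SGL (A + \sum_(i < r) x i *m (x i)^T) ->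
  exists i : 'I_r, ((x i)^T *m invmx A *m x i) 0 0 = 0.
Proof.
move=> odd_r _ _ /andP[/eqP symA unitA] /andP[_ unitAxx].
pose X := \matrix_i (x i)^T.
have colX i : col i X^T = x i by rewrite -tr_row rowK trmxK.
have sumX : \sum_(i < r) x i *m (x i)^T = X^T *m X.
  by rewrite mulmx_sum_col_row; apply: eq_bigr => i _; rewrite colX rowK.
set N := 1%:M + X *m invmx A *m X^T.
have unitN : N \in unitmx by apply: unitmx_capacitance => //; rewrite -sumX.
have symN : N^T = N by rewrite linearD /= trmx1 !trmx_mul trmxK trmx_inv symA mulmxA.
case: (pickP (fun i => ((x i)^T *m invmx A *m x i) 0 0 == 0)) => [i /eqP | qform_neq0].
  by exists i.
have diagN i : N i i = 0.
  have /eq1_F2 qform1 : ((x i)^T *m invmx A *m x i) 0 0 != 0 by rewrite qform_neq0.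
  rewrite mxE mulmx_row_col !row_mul colX rowK qform1 mxE eqxx mulr1n.
  exact: (addrr_pchar2 (pchar_Fp _)).
by move: unitN; rewrite unitmxE (det_alternating_F2_odd odd_r symN diagN) unitr0.
Qed.
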